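(* Suppose that $n=m$ and $W=(w_{ij})\in(\mathbb{R}_{>0})^{n\times n}$ is symmetric. Then $T=T(W)=(t_{ij})$ is also symmetric, and the Jacobian of the map $$(\log w_{ij},\ 1\le i\le j\le n)\mapsto (\log t_{ij},\ 1\le i\le j\le n)$$ is $\pm 1$.
   Context: The geometric RSK map $T:(\mathbb{R}_{>0})^{n\times m}\to(\mathbb{R}_{>0})^{n\times m}$ is defined by local moves: for $2\le i\le n$, $2\le j\le m$, $l_{ij}$ replaces the submatrix $\begin{pmatrix} x_{i-1,j-1}& x_{i-1,j}\\ x_{i,j-1}& x_{ij}\end{pmatrix}=\begin{pmatrix} a& b\\ c& d\end{pmatrix}$ by $\begin{pmatrix} bc/(ab+ac) & b\\ c& d(b+c) \end{pmatrix}$; $l_{i1}$ replaces $x_{i1}$ by $x_{i-1,1}x_{i1}$; $l_{1j}$ replaces $x_{1j}$ by $x_{1,j-1}x_{1j}$; $l_{11}$ is the identity. With $\pi^j_i=l_{ij}\circ\cdots\circ l_{i1}$, $R_i=\pi_1^{m-i+1}\circ\cdots\circ\pi^m_i$ ($i\le m$), $R_i=\pi^1_{i-m+1}\circ\cdots\circ\pi^m_i$ ($i\ge m$), $T=R_n\circ\cdots\circ R_1$. Here $m=n$. *)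

From HB Require Import structures.
From mathcomp Require Import all_boot all_order all_algebra.
From mathcomp Require Import all_classical all_reals all_analysis.
Set Implicit Arguments. Unset Strict Implicit. Unset Printing Implicit Defensive.
Import Order.TTheory GRing.Theory Num.Theory.
Local Open Scope ring_scope.

(* Matrices are represented as functions nat -> nat -> R, with the paper's
   1-based indices: entry x_{ij} of an n x m matrix is X i j, 1<=i<=n, 1<=j<=m.
   Entries outside this range are never read by the maps below. *)

Definition upd (R : Type) (X : nat -> nat -> R) (i j : nat) (v : R) :
  nat -> nat -> R :=
  fun p q => if (p == i) && (q == j) then v else X p q.

Definition lmove (R : realType) (i j : nat) (X : nat -> nat -> R) :
  nat -> nat -> R :=
  if (i == 1%N) && (j == 1%N) then X
  else if j == 1%N then upd X i 1 (X i.-1 1%N * X i 1%N)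
  else if i == 1%N then upd X 1 j (X 1%N j.-1 * X 1%N j)
  else
    let a := X i.-1 j.-1 in let b := X i.-1 j in
    let c := X i j.-1 in let d := X i j in
    upd (upd X i.-1 j.-1 (b * c / (a * b + a * c))) i j (d * (b + c)).

Definition gpi (R : realType) (i j : nat) (X : nat -> nat -> R) :=
  foldl (fun Y k => lmove i k Y) X (iota 1 j).

(* R_i = pi^{m-min(i,m)+1}_{i-min(i,m)+1} o ... o pi^m_i (pi^m_i applied
   first); this covers both cases i <= m and i >= m of the paper. *)
Definition growR (R : realType) (m i : nat) (X : nat -> nat -> R) :=
  foldl (fun Y k => gpi (i - k) (m - k) Y) X (iota 0 (minn i m)).

Definition gRSK (R : realType) (n m : nat) (X : nat -> nat -> R) :=
  foldl (fun Y i => growR m i Y) X (iota 1 n).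

(* Coordinates (i,j), 1 <= i <= j <= n; here stored 0-based as ordinals. *)
Definition UT (n : nat) := {p : 'I_n * 'I_n | (p.1 <= p.2)%N}.

(* W with the symmetric pair of entries w_{ij}=w_{ji} indexed by b multiplied
   by e^t, i.e. log w_b shifted by t. *)
Definition pert (R : realType) (n : nat) (W : nat -> nat -> R) (b : UT n)
  (t : R) : nat -> nat -> R :=
  fun p q =>
    if ((p == (val b).1.+1) && (q == (val b).2.+1))
       || ((p == (val b).2.+1) && (q == (val b).1.+1))
    then W p q * expR t else W p q.

Definition logT (R : realType) (n : nat) (W : nat -> nat -> R) (b a : UT n) :
  R -> R :=
  fun t => ln (gRSK n n (pert W b t) (val a).1.+1 (val a).2.+1).

(* Jacobian matrix of (log w_{ij})_{i<=j} |-> (log t_{ij})_{i<=j} at W: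
   entry (a,b) is d(log t_a)/d(log w_b), coordinates enumerated by enum. *)
Definition logjac (R : realType) (n : nat) (W : nat -> nat -> R) :
  'M[R]_#|{: UT n}| :=
  \matrix_(a < #|{: UT n}|, b < #|{: UT n}|)
    derive1 (logT W (@enum_val _ (mem {: UT n}) b) (@enum_val _ (mem {: UT n}) a)) 0.

(* The map T is a word of local moves, and moves whose windows do not
   overlap commute.  Reordering the word, T becomes, pass by pass and
   antidiagonal by antidiagonal, a composition of blocks: a move at (r, c),
   r <= c, followed at once by the move at (c, r).  The rules are symmetric
   in the two off-diagonal entries of a window, so each block preserves
   symmetric matrices, whence T(W) is symmetric.
   Logarithmic derivatives are pushed through the same moves as pairs
   (value, derivative of log).  On symmetric tangents, in the coordinates
   log w_ij with i <= j, the linearisation of a block differs from the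
   identity only in the rows of the (at most two) entries written by the move
   at (r, c); there it has diagonal entry 1 or -1 and no weight on the other
   written entry.  Hence every block Jacobian has determinant +-1, and so has
   their product, the Jacobian of the theorem. *)

From HB Require Import structures.
From mathcomp Require Import all_boot all_order all_algebra fingroup perm.
From mathcomp Require Import all_classical all_reals all_analysis.
From mathcomp Require Import zify ring lra.
Import Order.TTheory GRing.Theory Num.Theory.

Set Implicit Arguments.
Unset Strict Implicit.
Unset Printing Implicit Defensive.

Definition writes (i j p q : nat) : bool :=
  if (i == 1) && (j == 1) then false
  else if j == 1 then (p == i) && (q == 1)
  else if i == 1 then (p == 1) && (q == j)
  else ((p == i.-1) && (q == j.-1)) || ((p == i) && (q == j)).

Lemma writes_row1 j p q : 1 < j -> writes 1 j p q = (p == 1) && (q == j).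
Proof.
move=> hj; have nj : (j == 1) = false by lia.
by rewrite /writes nj.
Qed.

Lemma writes_inner i j p q : 1 < i -> 1 < j ->
  writes i j p q = ((p == i.-1) && (q == j.-1)) || ((p == i) && (q == j)).
Proof.
move=> hi hj; have ni : (i == 1) = false by lia.
have nj : (j == 1) = false by lia.
by rewrite /writes ni nj.
Qed.

Definition reads (i j p q : nat) : bool :=
  if (i == 1) && (j == 1) then false
  else if j == 1 then ((p == i.-1) || (p == i)) && (q == 1)
  else if i == 1 then (p == 1) && ((q == j.-1) || (q == j))
  else ((p == i.-1) || (p == i)) && ((q == j.-1) || (q == j)).

(* Pairs of moves that need not commute: both non-trivial, with overlapping
   windows, except the anti-diagonal neighbours, whose windows share only an
   entry written by neither move. *)
Definition interfere (e f : nat * nat) : bool :=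
  let: (i, j) := e in let: (k, l) := f in
  [&& ~~ ((i == 1) && (j == 1)), ~~ ((k == 1) && (l == 1)),
      i <= k.+1, k <= i.+1, j <= l.+1, l <= j.+1,
      ~~ ((i == k.+1) && (l == j.+1)) & ~~ ((k == i.+1) && (j == l.+1))].

Lemma writes_reads i j p q : writes i j p q -> reads i j p q.
Proof. by rewrite /writes /reads; repeat (case: ifP => //= _); lia. Qed.

Lemma interfereC e f : interfere e f = interfere f e.
Proof. by case: e f => i j [k l] /=; apply/idP/idP; lia. Qed.

Lemma noninterfering_disjoint i j k l p q :
  0 < i -> 0 < j -> 0 < k -> 0 < l ->
  ~~ interfere (i, j) (k, l) -> writes i j p q -> ~~ reads k l p q.
Proof. by rewrite /interfere /writes /reads; repeat (case: ifP => //= ?); lia. Qed.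

Lemma reads_in_range n i j p q : 1 <= i <= n -> 1 <= j <= n -> reads i j p q ->
  1 <= p <= n /\ 1 <= q <= n.
Proof. by rewrite /reads => hi hj; repeat (case: ifP => //= ?); lia. Qed.

Definition transp (T : Type) (X : nat -> nat -> T) : nat -> nat -> T :=
  fun p q => X q p.

Definition agree_on (T : Type) (n : nat) (X Y : nat -> nat -> T) :=
  forall p q, 1 <= p <= n -> 1 <= q <= n -> X p q = Y p q.

Definition in_square (n : nat) (e : nat * nat * nat) :=
  (1 <= e.1.1 <= n) && (1 <= e.1.2 <= n).

Definition pos_move (e : nat * nat * nat) := (0 < e.1.1) && (0 < e.1.2).

Section LocalMoves.

Variables (T : Type) (fa fd : T -> T -> T -> T -> T) (g : T -> T -> T).
Implicit Types (X Y : nat -> nat -> T).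

(* [lmove] with its rules abstracted, so that the same moves can also be run
   on pairs (value, logarithmic derivative): [fa]/[fd] give the new
   upper-left/lower-right entries of an inner window, [g] the new border entry. *)
Definition local_move (i j : nat) X : nat -> nat -> T :=
  if (i == 1) && (j == 1) then X
  else if j == 1 then upd X i 1 (g (X i.-1 1) (X i 1))
  else if i == 1 then upd X 1 j (g (X 1 j.-1) (X 1 j))
  else upd (upd X i.-1 j.-1 (fa (X i.-1 j.-1) (X i.-1 j) (X i j.-1) (X i j)))
        i j (fd (X i.-1 j.-1) (X i.-1 j) (X i j.-1) (X i j)).

Lemma local_move_frame i j X p q :
  0 < i -> 0 < j -> ~~ writes i j p q -> local_move i j X p q = X p q.
Proof. by rewrite /local_move /writes /upd; repeat (case: ifP => //=); lia. Qed.

Lemma local_move_local i j X Y p q : 0 < i -> 0 < j -> writes i j p q ->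
  (forall p' q', reads i j p' q' -> X p' q' = Y p' q') ->
  local_move i j X p q = local_move i j Y p q.
Proof.
rewrite /local_move /writes /reads /upd => hi hj hw h.
have [ei|ni] := eqVneq i 1; have [ej|nj] := eqVneq j 1;
  move: hw h; rewrite ?ei ?ej ?eqxx //=.
- rewrite (negbTE nj) /= => /andP[/eqP-> /eqP->] h.
  by rewrite !eqxx /= !h //= ?eqxx ?orbT.
- rewrite (negbTE ni) /= => /andP[/eqP-> /eqP->] h.
  by rewrite !eqxx /= !h //= ?eqxx ?orbT.
- rewrite (negbTE ni) (negbTE nj) /= => hw h.
  case/orP: hw => /andP[/eqP-> /eqP->]; rewrite !eqxx /=.
  + by case: ifP => [|_]; [lia | rewrite !h //= !eqxx ?orbT].
  + by rewrite !h //= !eqxx ?orbT.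
Qed.

Lemma local_moveC i j k l X :
  0 < i -> 0 < j -> 0 < k -> 0 < l -> ~~ interfere (i, j) (k, l) ->
  local_move i j (local_move k l X) = local_move k l (local_move i j X).
Proof.
move=> hi hj hk hl hd; apply/funext => p; apply/funext => q.
have hd' : ~~ interfere (k, l) (i, j) by rewrite interfereC.
case hw1: (writes i j p q).
  have hw2 : ~~ writes k l p q.
    by apply/negP => /writes_reads; apply/negP; apply: noninterfering_disjoint hw1.
  rewrite [RHS]local_move_frame //.
  apply: local_move_local => // p' q' hr; apply: local_move_frame => //.
  by apply: contraL hr; apply: noninterfering_disjoint hd'.
case hw2: (writes k l p q).
  rewrite [LHS]local_move_frame ?hw1 //.
  apply: local_move_local => // p' q' hr; symmetry; apply: local_move_frame => //.
  by apply: contraL hr; apply: noninterfering_disjoint hd.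
by rewrite !local_move_frame ?hw1 ?hw2.
Qed.

Lemma local_move_transp i j X :
  (forall a b c d, fa a b c d = fa a c b d) ->
  (forall a b c d, fd a b c d = fd a c b d) ->
  local_move i j (transp X) = transp (local_move j i X).
Proof.
move=> hfa hfd; apply/funext => p; apply/funext => q.
rewrite /local_move /transp /upd.
have [ei|ni] := eqVneq i 1; have [ej|nj] := eqVneq j 1;
  rewrite ?ei ?ej ?(negbTE ni) ?(negbTE nj) ?eqxx //=; try by rewrite andbC.
rewrite (andbC (q == j)) (andbC (q == j.-1)).
by repeat case: ifP => // _; rewrite ?hfa ?hfd.
Qed.

Lemma local_move_agree n i j X Y : 1 <= i <= n -> 1 <= j <= n ->
  agree_on n X Y -> agree_on n (local_move i j X) (local_move i j Y).
Proof.
move=> hi hj h p q hp hq.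
case hw: (writes i j p q); last by rewrite !local_move_frame ?hw //; [apply: h | lia..].
apply: local_move_local => //; try lia.
by move=> p' q' /(reads_in_range hi hj) [??]; apply: h.
Qed.

Lemma local_move_ul i j X : 1 < i -> 1 < j ->
  local_move i j X i.-1 j.-1 = fa (X i.-1 j.-1) (X i.-1 j) (X i j.-1) (X i j).
Proof. by rewrite /local_move /upd; repeat (case: ifP => //= ?); lia. Qed.

Lemma local_move_lr i j X : 1 < i -> 1 < j ->
  local_move i j X i j = fd (X i.-1 j.-1) (X i.-1 j) (X i j.-1) (X i j).
Proof. by rewrite /local_move /upd; repeat (case: ifP => //= ?); lia. Qed.

Lemma local_move_col1 i X : 1 < i -> local_move i 1 X i 1 = g (X i.-1 1) (X i 1).
Proof. by rewrite /local_move /upd; repeat (case: ifP => //= ?); lia. Qed.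

Lemma local_move_row1 j X : 1 < j -> local_move 1 j X 1 j = g (X 1 j.-1) (X 1 j).
Proof. by rewrite /local_move /upd; repeat (case: ifP => //= ?); lia. Qed.

(* A letter [(i, j, k)] is the move at [(i, j)]; the tag [k] only serves to
   order letters. *)
Definition run_moves (w : seq (nat * nat * nat)) X :=
  foldl (fun Y e => local_move e.1.1 e.1.2 Y) X w.

Lemma run_moves_cat u v X : run_moves (u ++ v) X = run_moves v (run_moves u X).
Proof. exact: foldl_cat. Qed.

Lemma run_moves_flatten (A : Type) (f : A -> seq (nat * nat * nat)) s X :
  run_moves (flatten (map f s)) X = foldl (fun Y x => run_moves (f x) Y) X s.
Proof. by elim: s X => //= x s IH X; rewrite run_moves_cat IH. Qed.

Lemma run_moves_row i k s X :
  run_moves [seq (i, j, k) | j <- s] X = foldl (fun Y j => local_move i j Y) X s.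
Proof. by elim: s X => //= j s IH X; rewrite IH. Qed.

Lemma run_moves_agree n w X Y :
  all (in_square n) w ->
  agree_on n X Y -> agree_on n (run_moves w X) (run_moves w Y).
Proof.
elim: w X Y => //= e w IH X Y /andP[/andP[??] hw] h.
by apply: IH => //; apply: local_move_agree.
Qed.

Lemma local_move_run_commute e u X :
  pos_move e -> all pos_move u -> all (fun f => ~~ interfere e.1 f.1) u ->
  local_move e.1.1 e.1.2 (run_moves u X) = run_moves u (local_move e.1.1 e.1.2 X).
Proof.
case: e => [[i j] m] /=.
elim: u X => [|[[k l] m'] u IH] X //= he /andP[hf hu] /andP[hd hdu].
rewrite IH //; congr run_moves.
by case/andP: he => ??; case/andP: hf => ??; rewrite local_moveC.
Qed.

(* A reordering of a word that keeps every interfering pair in place (the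
   orders [R1], [R2] witness this) does not change the composite. *)
Lemma run_moves_reorder (R1 R2 : rel (nat * nat * nat)) w1 w2 X :
  all pos_move w1 -> uniq w1 -> perm_eq w1 w2 ->
  pairwise R1 w1 -> pairwise R2 w2 ->
  (forall e f, e \in w1 -> f \in w1 -> interfere e.1 f.1 -> R1 e f -> R2 e f) ->
  (forall e f, R2 e f -> R2 f e -> False) ->
  run_moves w1 X = run_moves w2 X.
Proof.
elim: w1 w2 X => [|e w1 IH] w2 X; first by move=> _ _ /perm_size/esym/size0nil->.
move=> /= /andP[he hall] /andP[enw1 uw1] hp /andP[hR1e hR1] hR2 hagr hasym.
have uw2 : uniq w2 by rewrite -(perm_uniq hp) /= enw1.
have ew2 : e \in w2 by rewrite -(perm_mem hp) mem_head.
case/splitPr: ew2 hp hR2 uw2 => u v hp hR2 uw2.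
have hp' : perm_eq w1 (u ++ v).
  by rewrite -(perm_cons e) (perm_trans hp) // -cat1s perm_catCA.
move: hR2; rewrite pairwise_cat => /and3P[hal hR2u /andP[hR2e hR2v]].
have in_w1 f : f \in u -> f \in e :: w1 by rewrite (perm_mem hp) mem_cat => ->.
have hallu : all pos_move u.
  by apply/allP => f /in_w1; rewrite inE => /predU1P[->|/(allP hall)].
have hindep : all (fun f => ~~ interfere e.1 f.1) u.
  apply/allP => f fu; apply/negP => hd.
  have fe : f != e.
    apply/eqP => fe; move: uw2; rewrite cat_uniq /= => /and3P[_ + _].
    by rewrite negb_or -fe fu.
  have fw1 : f \in w1 by move: (in_w1 f fu); rewrite inE (negbTE fe).
  have h2 : R2 e f by apply: hagr; rewrite ?inE ?eqxx ?fw1 ?orbT //; apply: (allP hR1e).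
  have h3 : R2 f e by move/allrelP: hal => /(_ f e fu); rewrite inE eqxx => /(_ isT).
  exact: hasym h2 h3.
rewrite run_moves_cat /= -/(run_moves v _) local_move_run_commute // -run_moves_cat.
apply: IH => //.
- rewrite pairwise_cat; apply/and3P; split => //.
  by apply/allrelP => x y xu yv; move/allrelP: hal; apply => //; rewrite inE yv orbT.
- by move=> a b aw bw; apply: hagr; rewrite inE ?aw ?bw orbT.
Qed.

End LocalMoves.

(* Letter [(i - k, c, k)] is the move [l_{i-k,c}] of [pi^{n-k}_{i-k}] in [R_i]. *)
Definition rsk_word (n : nat) : seq (nat * nat * nat) :=
  flatten [seq flatten [seq [seq (i - k, c, k) | c <- iota 1 (n - k)]
                       | k <- iota 0 (minn i n)] | i <- iota 1 n].

Definition rsk_letter (n : nat) (e : nat * nat * nat) : bool :=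
  let: (r, c, m) := e in [&& 1 <= r, 1 <= c, r + m <= n & c + m <= n].

Lemma mem_rsk_word n e : (e \in rsk_word n) = rsk_letter n e.
Proof.
case: e => [[r c] m] /=; apply/idP/idP.
  case/flattenP => s1 /mapP[i]; rewrite mem_iota => hi ->.
  case/flattenP => s2 /mapP[k]; rewrite mem_iota => hk ->.
  by case/mapP => c'; rewrite mem_iota => hc [-> -> ->]; lia.
move=> h; apply/flattenP; eexists.
  by apply/mapP; exists (r + m) => //; rewrite mem_iota; lia.
apply/flattenP; eexists.
  by apply/mapP; exists m => //; rewrite mem_iota; lia.
apply/mapP; exists c; first by rewrite mem_iota; lia.
by congr (_, _, _); lia.
Qed.

Lemma rsk_word_in_square n : all (in_square n) (rsk_word n).
Proof. by apply/allP => [[[r c] m]]; rewrite mem_rsk_word /in_square /=; lia. Qed.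

Lemma pairwise_flatten_map (A B : eqType) (R : rel B) (P : rel A)
    (f : A -> seq B) s :
  pairwise P s ->
  (forall x y, x \in s -> y \in s -> P x y ->
     forall a b, a \in f x -> b \in f y -> R a b) ->
  (forall x, x \in s -> pairwise R (f x)) -> pairwise R (flatten (map f s)).
Proof.
elim: s => //= x s IH /andP[hx hs] hP hf.
rewrite pairwise_cat hf ?mem_head // IH // ?andbT.
- apply/allrelP => a b ax /flattenP[s1 /mapP[y ys ->] bfy].
  by apply: (hP x y) => //; rewrite ?inE ?ys ?eqxx ?orbT //; apply: (allP hx).
- by move=> y z ys zs; apply: hP; rewrite inE ?ys ?zs orbT.
- by move=> y ys; apply: hf; rewrite inE ys orbT.
Qed.

Lemma pairwise_ltn_iota a b : pairwise ltn (iota a b).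
Proof. by rewrite -sorted_pairwise ?iota_ltn_sorted //; exact: ltn_trans. Qed.

Definition rsk_order (e f : nat * nat * nat) : bool :=
  let: (r, c, m) := e in let: (r', c', m') := f in
  (r + m < r' + m') || (r + m == r' + m') && ((m < m') || (m == m') && (c < c')).

Lemma pairwise_rsk_word n : pairwise rsk_order (rsk_word n).
Proof.
apply: (@pairwise_flatten_map _ _ _ ltn); first exact: pairwise_ltn_iota.
  move=> i i' _ _ hii' a b /flattenP[s1 /mapP[k]]; rewrite mem_iota => hk ->.
  move=> /mapP[c hc ->] /flattenP[s2 /mapP[k']]; rewrite mem_iota => hk' ->.
  by move=> /mapP[c' hc' ->] /=; lia.
move=> i _; apply: (@pairwise_flatten_map _ _ _ ltn); first exact: pairwise_ltn_iota.
  move=> k k' _ _ hkk' a b /mapP[c]; rewrite mem_iota => hc ->.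
  by move=> /mapP[c']; rewrite mem_iota => hc' -> /=; lia.
move=> k _; rewrite pairwise_map.
by apply: sub_pairwise (pairwise_ltn_iota _ _) => x y /=; lia.
Qed.

(* Pass [m] of [rsk_word n] (the letters with tag [m]), regrouped by
   antidiagonals [r + c]: a block [(r, c, m)] with [r <= c] is the move at
   [(r, c)] followed by the move at its transpose [(c, r)]. *)
Definition sym_blocks (n : nat) : seq (nat * nat * nat) :=
  flatten [seq flatten [seq [seq (r, s - r, m)
                              | r <- iota 1 n & (r <= s - r) && (s - r + m <= n)]
                       | s <- iota 2 (2 * n)] | m <- iota 0 n].

Definition sym_block (d : nat * nat * nat) : seq (nat * nat * nat) :=
  let: (r, c, m) := d in if r == c then [:: (r, r, m)] else [:: (r, c, m); (c, r, m)].

Definition sym_word (n : nat) := flatten (map sym_block (sym_blocks n)).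

Definition block_order (e f : nat * nat * nat) : bool :=
  let: (r, c, m) := e in let: (r', c', m') := f in
  (m < m') || (m == m') && ((r + c < r' + c') || (r + c == r' + c') && (r < r')).

Definition sym_order (e f : nat * nat * nat) : bool :=
  let: (r, c, m) := e in let: (r', c', m') := f in
  (m < m') || (m == m') && ((r + c < r' + c') || (r + c == r' + c') &&
     ((minn r c < minn r' c') || (minn r c == minn r' c') && (c >= r) && (c' < r'))).

Lemma mem_sym_blocks n d :
  (d \in sym_blocks n) = let: (r, c, m) := d in [&& 1 <= r, r <= c & c + m <= n].
Proof.
case: d => [[r c] m] /=; apply/idP/idP.
  case/flattenP => s1 /mapP[m']; rewrite mem_iota => hm ->.
  case/flattenP => s2 /mapP[s]; rewrite mem_iota => hs ->.
  by case/mapP => r'; rewrite mem_filter mem_iota => /andP[hc hr] [-> -> ->]; lia.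
move=> h; apply/flattenP; eexists.
  by apply/mapP; exists m => //; rewrite mem_iota; lia.
apply/flattenP; eexists.
  by apply/mapP; exists (r + c) => //; rewrite mem_iota; lia.
apply/mapP; exists r; first by rewrite mem_filter mem_iota; lia.
by congr (_, _, _); lia.
Qed.

Definition block_in (n : nat) (d : nat * nat * nat) :=
  (1 <= d.1.1 <= d.1.2) && (d.1.2 <= n).

Lemma all_block_in n : all (block_in n) (sym_blocks n).
Proof. by apply/allP => [[[r c] m]]; rewrite mem_sym_blocks /block_in /=; lia. Qed.

Lemma mem_sym_word n e : (e \in sym_word n) = rsk_letter n e.
Proof.
case: e => [[r c] m] /=; apply/idP/idP.
  case/flattenP => s1 /mapP[[[r' c'] m']]; rewrite mem_sym_blocks => hd ->.
  by rewrite /sym_block; case: ifP => hrc; rewrite !inE ?xpair_eqE; lia.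
move=> h; apply/flattenP; exists (sym_block (minn r c, maxn r c, m)).
  by apply/mapP; exists (minn r c, maxn r c, m) => //; rewrite mem_sym_blocks; lia.
by rewrite /sym_block; case: ifP => hrc; rewrite !inE ?xpair_eqE; lia.
Qed.

Lemma pairwise_sym_blocks n : pairwise block_order (sym_blocks n).
Proof.
apply: (@pairwise_flatten_map _ _ _ ltn); first exact: pairwise_ltn_iota.
  move=> i i' _ _ hii' a b /flattenP[s1 /mapP[k]]; rewrite mem_iota => hk -> /mapP[c].
  rewrite mem_filter mem_iota => hc -> /flattenP[s2 /mapP[k']].
  rewrite mem_iota => hk' -> /mapP[c'].
  by rewrite mem_filter mem_iota => hc' -> /=; lia.
move=> i _; apply: (@pairwise_flatten_map _ _ _ ltn); first exact: pairwise_ltn_iota.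
  move=> k k' _ _ hkk' a b /mapP[c]; rewrite mem_filter mem_iota => hc -> /mapP[c'].
  by rewrite mem_filter mem_iota => hc' -> /=; lia.
move=> k _; rewrite pairwise_map.
by apply/pairwise_filter/sub_pairwise/pairwise_ltn_iota => x y /=; lia.
Qed.

Lemma pairwise_sym_word n : pairwise sym_order (sym_word n).
Proof.
apply: (@pairwise_flatten_map _ _ _ block_order); first exact: pairwise_sym_blocks.
  move=> [[r c] m] [[r' c'] m']; rewrite !mem_sym_blocks => hd hd' hl.
  move=> [[ar ac] am] [[br bc] bm]; rewrite /sym_block.
  by case: ifP => h1; case: ifP => h2; rewrite !inE !xpair_eqE /=; move: hl => /=; lia.
by move=> [[r c] m]; rewrite mem_sym_blocks => hd /=; case: ifP => //= h; lia.
Qed.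

Lemma uniq_rsk_word n : uniq (rsk_word n).
Proof. by apply: (pairwise_uniq _ (pairwise_rsk_word n)) => [[[r c] m]] /=; lia. Qed.

Lemma uniq_sym_word n : uniq (sym_word n).
Proof. by apply: (pairwise_uniq _ (pairwise_sym_word n)) => [[[r c] m]] /=; lia. Qed.

Definition run_blocks (T : Type) fa fd (g : T -> T -> T) ds (X : nat -> nat -> T) :=
  foldl (fun Y d => run_moves fa fd g (sym_block d) Y) X ds.

Lemma run_moves_rsk_word (T : Type) fa fd (g : T -> T -> T) n X :
  run_moves fa fd g (rsk_word n) X = run_blocks fa fd g (sym_blocks n) X.
Proof.
rewrite /run_blocks -run_moves_flatten -/(sym_word n).
apply: (@run_moves_reorder _ fa fd g rsk_order sym_order).
- by apply/allP => [[[r c] m]]; rewrite mem_rsk_word /pos_move /=; lia.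
- exact: uniq_rsk_word.
- apply: uniq_perm; [exact: uniq_rsk_word | exact: uniq_sym_word |].
  by move=> e; rewrite mem_rsk_word mem_sym_word.
- exact: pairwise_rsk_word.
- exact: pairwise_sym_word.
- move=> [[r c] m] [[r' c'] m']; rewrite !mem_rsk_word /=; lia.
- move=> [[r c] m] [[r' c'] m'] /=; lia.
Qed.

Section SymmetricBlocks.

Variables (T : Type) (fa fd : T -> T -> T -> T -> T) (g : T -> T -> T).
Hypothesis fa_sym : forall a b c d, fa a b c d = fa a c b d.
Hypothesis fd_sym : forall a b c d, fd a b c d = fd a c b d.

Lemma sym_block_transp d (Y : nat -> nat -> T) :
  1 <= d.1.1 <= d.1.2 -> transp Y = Y ->
  transp (run_moves fa fd g (sym_block d) Y) = run_moves fa fd g (sym_block d) Y.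
Proof.
case: d => [[r c] m] /= hrc hY; rewrite /sym_block /run_moves.
case: ifP => [_|hne] /=; first by rewrite -local_move_transp // hY.
rewrite -!local_move_transp // hY local_moveC //; try lia.
by rewrite /interfere; lia.
Qed.

Lemma run_blocks_transp ds (Y : nat -> nat -> T) :
  all (fun d => 1 <= d.1.1 <= d.1.2) ds -> transp Y = Y ->
  transp (run_blocks fa fd g ds Y) = run_blocks fa fd g ds Y.
Proof.
elim: ds Y => //= d ds IH Y /andP[hd hds] hY.
by apply: IH => //; apply: sym_block_transp.
Qed.

End SymmetricBlocks.

Local Open Scope ring_scope.

Definition gr_ul {R : realType} (a b c d : R) := b * c / (a * b + a * c).
Definition gr_lr {R : realType} (a b c d : R) := d * (b + c).
Definition gr_edge {R : realType} (x y : R) := x * y.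

Notation rsk_move := (local_move gr_ul gr_lr gr_edge).
Notation rsk_run := (run_moves gr_ul gr_lr gr_edge).

Section GeometricRSK.

Variable R : realType.
Implicit Types (a b c d : R) (X Y W : nat -> nat -> R).

Lemma gr_ul_sym a b c d : gr_ul a b c d = gr_ul a c b d.
Proof. by rewrite /gr_ul [b * c]mulrC [a * b + _]addrC. Qed.

Lemma gr_lr_sym a b c d : gr_lr a b c d = gr_lr a c b d.
Proof. by rewrite /gr_lr addrC. Qed.

Lemma gRSK_rsk_word n X : gRSK n n X = rsk_run (rsk_word n) X.
Proof.
rewrite /gRSK /rsk_word run_moves_flatten.
congr foldl; apply/funext => Y; apply/funext => i; rewrite /growR run_moves_flatten.
by congr foldl; apply/funext => Z; apply/funext => k; rewrite run_moves_row.
Qed.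

Lemma gRSK_run_blocks n X :
  gRSK n n X = run_blocks gr_ul gr_lr gr_edge (sym_blocks n) X.
Proof. by rewrite gRSK_rsk_word run_moves_rsk_word. Qed.

Lemma gRSK_agree n X Y : agree_on n X Y -> agree_on n (gRSK n n X) (gRSK n n Y).
Proof.
by rewrite !gRSK_rsk_word; apply: run_moves_agree (rsk_word_in_square n).
Qed.

Lemma gRSK_transp n X : transp X = X -> transp (gRSK n n X) = gRSK n n X.
Proof.
rewrite gRSK_run_blocks; apply: (run_blocks_transp gr_edge gr_ul_sym gr_lr_sym).
by apply: sub_all (all_block_in n) => d /andP[].
Qed.

Definition sym_ext W : nat -> nat -> R := fun p q => if (p <= q)%N then W p q else W q p.

Lemma transp_sym_ext W : transp (sym_ext W) = sym_ext W.
Proof.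
apply/funext => p; apply/funext => q; rewrite /transp /sym_ext.
by case: (leqP q p) => h1; case: (leqP p q) => h2 //; [have -> : p = q by lia | lia].
Qed.

Lemma sym_ext_agree n W :
  (forall i j, (1 <= i <= n)%N -> (1 <= j <= n)%N -> W i j = W j i) ->
  agree_on n W (sym_ext W).
Proof. by move=> Wsym p q hp hq; rewrite /sym_ext; case: leqP => // _; apply: Wsym. Qed.

Lemma gRSK_sym n W :
  (forall i j, (1 <= i <= n)%N -> (1 <= j <= n)%N -> W i j = W j i) ->
  forall i j, (1 <= i <= n)%N -> (1 <= j <= n)%N -> gRSK n n W i j = gRSK n n W j i.
Proof.
move=> /sym_ext_agree/gRSK_agree hag i j hi hj; rewrite !hag //.
by rewrite -[in LHS]gRSK_transp ?transp_sym_ext.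
Qed.

End GeometricRSK.

(* A pair [(x, v)] records a positive value [x] and the derivative [v] of
   [log x]; the second components are the logarithmic derivatives of the
   rules. *)
Definition dual_ul {R : realType} (za zb zc zd : R * R) : R * R :=
  (gr_ul za.1 zb.1 zc.1 zd.1,
   zb.2 + zc.2 - za.2 - (zb.1 * zb.2 + zc.1 * zc.2) / (zb.1 + zc.1)).
Definition dual_lr {R : realType} (za zb zc zd : R * R) : R * R :=
  (gr_lr za.1 zb.1 zc.1 zd.1, zd.2 + (zb.1 * zb.2 + zc.1 * zc.2) / (zb.1 + zc.1)).
Definition dual_edge {R : realType} (za zb : R * R) : R * R :=
  (gr_edge za.1 zb.1, za.2 + zb.2).

Notation dual_move := (local_move dual_ul dual_lr dual_edge).
Notation dual_run := (run_moves dual_ul dual_lr dual_edge).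

Definition tangent {R : realType} (f : R -> R) (z : R * R) :=
  [/\ f 0 = z.1, 0 < z.1 & is_derive (0 : R) (1 : R) f (z.1 * z.2)].

Definition tangent_on {R : realType} n (F : R -> nat -> nat -> R) (Z : nat -> nat -> R * R) :=
  forall p q, (1 <= p <= n)%N -> (1 <= q <= n)%N -> tangent (fun t => F t p q) (Z p q).

Section Tangents.

Variable R : realType.
Implicit Types (a b c d : R -> R) (za zb zc zd : R * R).

Lemma dual_ul_sym za zb zc zd : dual_ul za zb zc zd = dual_ul za zc zb zd.
Proof.
by rewrite /dual_ul gr_ul_sym; congr (_, _); rewrite (addrC zb.2) (addrC zb.1) (addrC (_ * _)).
Qed.

Lemma dual_lr_sym za zb zc zd : dual_lr za zb zc zd = dual_lr za zc zb zd.
Proof. by rewrite /dual_lr gr_lr_sym (addrC zb.1) (addrC (_ * _)). Qed.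

Lemma tangent_gr_edge a b za zb : tangent a za -> tangent b zb ->
  tangent (fun t => gr_edge (a t) (b t)) (dual_edge za zb).
Proof.
case=> ea pa da [eb pb db]; split; rewrite /gr_edge /= ?ea ?eb //; first exact: mulr_gt0.
move: (is_deriveM da db) => /is_derive_eq; apply.
by rewrite ea eb /gr_edge /GRing.scale /=; ring.
Qed.

Lemma tangent_gr_lr a b c d za zb zc zd :
  tangent b zb -> tangent c zc -> tangent d zd ->
  tangent (fun t => gr_lr (a t) (b t) (c t) (d t)) (dual_lr za zb zc zd).
Proof.
case=> eb pb db [ec pc dc] [ed pd dd].
split; rewrite /gr_lr /= ?eb ?ec ?ed //; first by rewrite mulr_gt0 ?addr_gt0.
move: (is_deriveM dd (is_deriveD db dc)) => /is_derive_eq; apply.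
rewrite /GRing.scale /gr_lr /= !fctE eb ec ed.
by field; rewrite lt0r_neq0 ?addr_gt0.
Qed.

Lemma tangent_gr_ul a b c d za zb zc zd :
  tangent a za -> tangent b zb -> tangent c zc ->
  tangent (fun t => gr_ul (a t) (b t) (c t) (d t)) (dual_ul za zb zc zd).
Proof.
case=> ea pa da [eb pb db] [ec pc dc].
have den_gt0 : 0 < za.1 * zb.1 + za.1 * zc.1 by rewrite addr_gt0 ?mulr_gt0.
split; rewrite /gr_ul /= ?ea ?eb ?ec //; first by rewrite divr_gt0 ?mulr_gt0.
have den0 : (a * b + a * c) 0 != 0 by rewrite !fctE ea eb ec lt0r_neq0.
have := is_deriveV den0 (is_deriveD (is_deriveM da db) (is_deriveM da dc)).
move=> /(is_deriveM (is_deriveM db dc)) /is_derive_eq; apply.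
rewrite /GRing.scale /gr_ul /= !fctE ea eb ec; field.
by rewrite !lt0r_neq0 ?addr_gt0 ?mulr_gt0.
Qed.

Lemma tangent_on_move n (F : R -> nat -> nat -> R) Z i j :
  (1 <= i <= n)%N -> (1 <= j <= n)%N -> tangent_on n F Z -> tangent_on n (fun t => rsk_move i j (F t)) (dual_move i j Z).
Proof.
move=> hi hj hF p q hp hq.
case hw: (writes i j p q); last first.
  have i_gt0 : (0 < i)%N by lia.
  have j_gt0 : (0 < j)%N by lia.
  under eq_fun => t do rewrite local_move_frame ?hw //.
  by rewrite local_move_frame ?hw //; apply: hF.
move: hw; rewrite /writes.
have [ei|ni] := eqVneq i 1; have [ej|nj] := eqVneq j 1;
  rewrite ?ei ?ej ?(negbTE ni) ?(negbTE nj) ?eqxx //=.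
- move=> /andP[/eqP-> /eqP->]; have j_gt1 : (1 < j)%N by lia.
  under eq_fun => t do rewrite local_move_row1 //.
  by rewrite local_move_row1 //; apply: tangent_gr_edge; apply: hF; lia.
- move=> /andP[/eqP-> /eqP->]; have i_gt1 : (1 < i)%N by lia.
  under eq_fun => t do rewrite local_move_col1 //.
  by rewrite local_move_col1 //; apply: tangent_gr_edge; apply: hF; lia.
have i_gt1 : (1 < i)%N by lia.
have j_gt1 : (1 < j)%N by lia.
case/orP => /andP[/eqP-> /eqP->].
- under eq_fun => t do rewrite local_move_ul //.
  by rewrite local_move_ul //; apply: tangent_gr_ul; apply: hF; lia.
- under eq_fun => t do rewrite local_move_lr //.
  by rewrite local_move_lr //; apply: tangent_gr_lr; apply: hF; lia.
Qed.

Lemma tangent_on_run n w (F : R -> nat -> nat -> R) Z :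
  all (in_square n) w -> tangent_on n F Z ->
  tangent_on n (fun t => rsk_run w (F t)) (dual_run w Z).
Proof.
elim: w F Z => //= e w IH F Z /andP[/andP[??] hw] hF.
exact: (IH (fun t => rsk_move e.1.1 e.1.2 (F t))) (tangent_on_move _ _ hF).
Qed.

Lemma tangent_ln f z : tangent f z -> is_derive (0 : R) (1 : R) (fun t => ln (f t)) z.2.
Proof.
case=> e p d; have p0 : 0 < f 0 by rewrite e.
move: (is_derive1_comp (is_derive1_ln p0) d) => /is_derive_eq; apply.
by rewrite e mulrA mulVf ?mul1r //; exact: lt0r_neq0.
Qed.

End Tangents.

Definition zip_grid (A B : Type) (Y : nat -> nat -> A) (v : nat -> nat -> B) :
  nat -> nat -> A * B := fun p q => (Y p q, v p q).

Definition snd_grid (A B : Type) (Z : nat -> nat -> A * B) : nat -> nat -> B :=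
  fun p q => (Z p q).2.

Lemma transp_zip_grid (A B : Type) (Y : nat -> nat -> A) (v : nat -> nat -> B) :
  transp (zip_grid Y v) = zip_grid (transp Y) (transp v).
Proof. by []. Qed.

Lemma zip_grid_inj (A B : Type) (Y Y' : nat -> nat -> A) (v v' : nat -> nat -> B) :
  zip_grid Y v = zip_grid Y' v' -> Y = Y' /\ v = v'.
Proof.
move=> e; split; apply/funext => p; apply/funext => q.
  by have /pair_equal_spec[] := congr1 (fun Z => Z p q) e.
by have /pair_equal_spec[] := congr1 (fun Z => Z p q) e.
Qed.

Section Linearisation.

Variable R : realType.
Implicit Types (Y v : nat -> nat -> R) (w : seq (nat * nat * nat)).

Definition tangent_move i j Y v := snd_grid (dual_move i j (zip_grid Y v)).

Definition tangent_run w Y v := snd_grid (dual_run w (zip_grid Y v)).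

Lemma dual_move_zip i j Y v :
  dual_move i j (zip_grid Y v) = zip_grid (rsk_move i j Y) (tangent_move i j Y v).
Proof.
apply/funext => p; apply/funext => q.
rewrite /tangent_move /snd_grid /zip_grid /local_move /upd.
by repeat case: ifP.
Qed.

Lemma dual_run_zip w Y v :
  dual_run w (zip_grid Y v) = zip_grid (rsk_run w Y) (tangent_run w Y v).
Proof.
elim: w Y v => [|e w IH] Y v //=.
by rewrite /tangent_run /= dual_move_zip IH.
Qed.

Lemma tangent_move_lin i j Y v1 v2 k :
  tangent_move i j Y (fun p q => v1 p q + k * v2 p q) =
  (fun p q => tangent_move i j Y v1 p q + k * tangent_move i j Y v2 p q).
Proof.
apply/funext => p; apply/funext => q.
rewrite /tangent_move /snd_grid /local_move /upd /zip_grid.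
by repeat case: ifP => _ //=; rewrite /dual_ul /dual_lr /dual_edge /=; ring.
Qed.

Lemma tangent_run_lin w Y v1 v2 k :
  tangent_run w Y (fun p q => v1 p q + k * v2 p q) =
  (fun p q => tangent_run w Y v1 p q + k * tangent_run w Y v2 p q).
Proof.
rewrite /tangent_run; elim: w Y v1 v2 => [|e w IH] Y v1 v2 //=.
by rewrite !dual_move_zip tangent_move_lin IH.
Qed.

Lemma tangent_move0 i j Y : tangent_move i j Y (fun _ _ => 0) = (fun _ _ => 0).
Proof.
apply/funext => p; apply/funext => q.
rewrite /tangent_move /snd_grid /local_move /upd /zip_grid.
by repeat case: ifP => _ //=; rewrite /dual_ul /dual_lr /dual_edge /=; ring.
Qed.

Lemma tangent_run0 w Y : tangent_run w Y (fun _ _ => 0) = (fun _ _ => 0).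
Proof.
rewrite /tangent_run; elim: w Y => [|e w IH] Y //=.
by rewrite dual_move_zip tangent_move0 IH.
Qed.

Lemma tangent_run_sum (I : Type) w Y (s : seq I) (c : I -> R) f :
  tangent_run w Y (fun p q => \sum_(y <- s) c y * f y p q) =
  (fun p q => \sum_(y <- s) c y * tangent_run w Y (f y) p q).
Proof.
elim: s => [|x s IH].
  under eq_fun => p do under eq_fun => q do rewrite big_nil.
  by rewrite tangent_run0; apply/funext => p; apply/funext => q; rewrite big_nil.
under eq_fun => p do under eq_fun => q do rewrite big_cons addrC.
by rewrite tangent_run_lin IH; apply/funext => p; apply/funext => q; rewrite big_cons addrC.
Qed.

Lemma tangent_run_agree n w Y v v' :
  all (in_square n) w ->
  agree_on n v v' -> agree_on n (tangent_run w Y v) (tangent_run w Y v').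
Proof.
move=> hw h p q hp hq; rewrite /tangent_run /snd_grid.
have hz : agree_on n (zip_grid Y v) (zip_grid Y v') by move=> ? ? ? ?; rewrite /zip_grid h.
by rewrite (run_moves_agree _ _ _ hw hz).
Qed.

End Linearisation.

Definition ut_row n (u : UT n) : nat := (val u).1.+1.
Definition ut_col n (u : UT n) : nat := (val u).2.+1.
Definition ut_at n (x : 'I_#|{: UT n}|) : UT n := @enum_val _ (mem {: UT n}) x.

Lemma ut_bounds n (u : UT n) :
  [/\ (1 <= ut_row u)%N, (ut_row u <= ut_col u)%N & (ut_col u <= n)%N].
Proof.
by case: u => [[a b] /= hab]; have := ltn_ord b; rewrite /ut_row /ut_col /=; split; lia.
Qed.

Lemma ut_eq n (u u' : UT n) : ut_row u = ut_row u' -> ut_col u = ut_col u' -> u = u'.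
Proof.
case: u u' => [[a b] h] [[a' b'] h'] /= [e1] [e2].
by apply: val_inj; congr (_, _); apply: val_inj.
Qed.

Lemma ut_at_inj n : injective (@ut_at n).
Proof. exact: enum_val_inj. Qed.

Lemma ut_cover n p q : (1 <= p <= n)%N -> (1 <= q <= n)%N ->
  exists x : 'I_#|{: UT n}|, ut_row (ut_at x) = minn p q /\ ut_col (ut_at x) = maxn p q.
Proof.
move=> hp hq.
have ha : ((minn p q).-1 < n)%N by lia.
have hb : ((maxn p q).-1 < n)%N by lia.
have hab : ((Ordinal ha, Ordinal hb).1 <= (Ordinal ha, Ordinal hb).2)%N by rewrite /=; lia.
exists (enum_rank (exist (fun u : 'I_n * 'I_n => u.1 <= u.2)%N _ hab)).
by rewrite /ut_at enum_rankK /ut_row /ut_col /=; split; lia.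
Qed.

Definition sym_unit (R : pzRingType) n (u : UT n) : nat -> nat -> R :=
  fun p q => if ((p == ut_row u) && (q == ut_col u)) || ((p == ut_col u) && (q == ut_row u))
             then 1 else 0.

Lemma transp_sym_unit (R : pzRingType) n (u : UT n) : transp (sym_unit R u) = sym_unit R u.
Proof.
apply/funext => p; apply/funext => q; rewrite /transp /sym_unit.
by rewrite orbC (andbC (q == _)) (andbC (q == _)).
Qed.

Lemma sym_unit_diag (R : pzRingType) n x y :
  sym_unit R (ut_at y) (ut_row (@ut_at n x)) (ut_col (ut_at x)) = (x == y)%:R.
Proof.
rewrite /sym_unit; have [<-|nxy] := eqVneq x y; first by rewrite !eqxx.
case: ifP => // h; case/negP: nxy; apply/eqP/ut_at_inj.
case: (ut_bounds (ut_at x)) (ut_bounds (ut_at y)) => ? ? ? [? ? ?].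
by apply: ut_eq; lia.
Qed.

Section Jacobian.

Variable R : realType.
Implicit Types (Y v : nat -> nat -> R).

Lemma sym_grid_expand n v : transp v = v ->
  agree_on n v (fun p q => \sum_(y < #|{: UT n}|)
                            v (ut_row (ut_at y)) (ut_col (ut_at y)) * sym_unit R (ut_at y) p q).
Proof.
move=> hv p q hp hq; have [x [ex1 ex2]] := ut_cover hp hq.
rewrite (bigD1 x) //= big1 ?addr0 => [|y nyx].
  rewrite /sym_unit ex1 ex2; case: ifP => [_|]; last by lia.
  rewrite mulr1; case: (leqP p q) => hpq; first by congr v; lia.
  by rewrite -[in RHS]hv /transp; congr v; lia.
rewrite /sym_unit; case: ifP => [h|_]; last by rewrite mulr0.
case/negP: nyx; apply/eqP/ut_at_inj.
by case: (ut_bounds (ut_at y)) => ? ? ?; apply: ut_eq; lia.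
Qed.

Definition ut_vec n v : 'cV[R]_#|{: UT n}| := \col_x v (ut_row (ut_at x)) (ut_col (ut_at x)).

(* On symmetric tangents the upper-triangular entries determine the rest, so
   the linearisation of a block acts on [ut_vec] through this matrix. *)
Definition block_jacobian n d Y : 'M[R]_#|{: UT n}| :=
  \matrix_(x, y) tangent_run (sym_block d) Y (sym_unit R (ut_at y))
                              (ut_row (ut_at x)) (ut_col (ut_at x)).

Fixpoint jacobian_prod n ds Y : 'M[R]_#|{: UT n}| :=
  if ds is d :: ds' then jacobian_prod n ds' (rsk_run (sym_block d) Y) *m block_jacobian n d Y
  else 1%:M.

Lemma sym_block_in_square n d : block_in n d -> all (in_square n) (sym_block d).
Proof.
by case: d => [[r c] m]; rewrite /block_in /sym_block /in_square /=; case: ifP => _ /=; lia.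
Qed.

Lemma ut_vec_tangent_block n d Y v : block_in n d -> transp v = v ->
  ut_vec n (tangent_run (sym_block d) Y v) = block_jacobian n d Y *m ut_vec n v.
Proof.
move=> hd hv; apply/matrixP => x z; rewrite !mxE.
under eq_bigr do rewrite !mxE mulrC.
have := tangent_run_sum (sym_block d) Y (index_enum 'I_#|{: UT n}|)
  (fun y => v (ut_row (ut_at y)) (ut_col (ut_at y))) (fun y => sym_unit R (ut_at y)).
move=> /(congr1 (fun F => F (ut_row (ut_at x)) (ut_col (ut_at x)))) /= <-.
have [? ? ?] := ut_bounds (ut_at x).
by apply: (tangent_run_agree _ (sym_block_in_square hd) (sym_grid_expand hv)); lia.
Qed.

Lemma ut_vec_tangent_blocks n ds Y v :
  all (block_in n) ds -> transp Y = Y -> transp v = v ->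
  ut_vec n (snd_grid (run_blocks dual_ul dual_lr dual_edge ds (zip_grid Y v))) =
  jacobian_prod n ds Y *m ut_vec n v.
Proof.
elim: ds Y v => [|d ds IH] Y v /=; first by rewrite mul1mx.
move=> /andP[hd hds] hY hv.
have hZ : transp (dual_run (sym_block d) (zip_grid Y v)) =
           dual_run (sym_block d) (zip_grid Y v).
  apply: (sym_block_transp dual_edge (@dual_ul_sym R) (@dual_lr_sym R)).
    by case/andP: hd.
  by rewrite transp_zip_grid hY hv.
move: hZ; rewrite dual_run_zip transp_zip_grid => /zip_grid_inj[hY' hv'].
by rewrite -/(run_blocks _ _ _ ds _) IH // ut_vec_tangent_block // mulmxA.
Qed.

Lemma ut_vec_sym_unit n y : ut_vec n (sym_unit R (ut_at y)) = delta_mx y 0.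
Proof. by apply/matrixP => x k; rewrite !mxE sym_unit_diag ord1 eqxx andbT eq_sym. Qed.

End Jacobian.

(* Nonzero off-diagonal entries lead from [A] to its complement, so no two of
   them are consecutive along a cycle of a permutation: every term of the
   Leibniz expansion but the diagonal one vanishes. *)
Lemma det_diag_of_support (R : comPzRingType) K (M : 'M[R]_K) (A : pred 'I_K) :
  (forall x y, x != y -> M x y != 0 -> A x && ~~ A y) -> \det M = \prod_x M x x.
Proof.
move=> hM; rewrite /determinant (bigD1 (1%g : 'S_K)) //= [X in _ + X]big1 ?addr0.
  by rewrite odd_perm1 expr0 mul1r; apply: eq_bigr => i _; rewrite perm1.
move=> s hs.
have [i0 hi0] : exists i, s i != i.
  apply/existsP; apply: contraR hs; rewrite negb_exists => /forallP h.
  by apply/eqP/permP => i; rewrite perm1; apply/eqP; move: (h i); rewrite negbK.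
suff [i hi] : exists i, M i (s i) = 0 by rewrite (bigD1 i) //= hi mul0r mulr0.
have [hz|h] := eqVneq (M i0 (s i0)) 0; first by exists i0.
have /andP[_ hnA] : A i0 && ~~ A (s i0) by apply: hM; rewrite // eq_sym.
have [hz|h2] := eqVneq (M (s i0) (s (s i0))) 0; first by exists (s i0).
have hsi : s i0 != s (s i0) by apply: contra hi0 => /eqP /perm_inj <-.
by have := hM _ _ hsi h2; rewrite (negbTE hnA).
Qed.

Section BlockDeterminant.

Variable R : realType.
Implicit Types (Y v : nat -> nat -> R).

Lemma tangent_move_frame i j Y v p q :
  (0 < i)%N -> (0 < j)%N -> ~~ writes i j p q -> tangent_move i j Y v p q = v p q.
Proof. by move=> hi hj hw; rewrite /tangent_move /snd_grid local_move_frame. Qed.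

Lemma tangent_move_ul i j Y v : (1 < i)%N -> (1 < j)%N ->
  tangent_move i j Y v i.-1 j.-1 = v i.-1 j + v i j.-1 - v i.-1 j.-1
    - (Y i.-1 j * v i.-1 j + Y i j.-1 * v i j.-1) / (Y i.-1 j + Y i j.-1).
Proof. by move=> hi hj; rewrite /tangent_move /snd_grid local_move_ul. Qed.

Lemma tangent_move_lr i j Y v : (1 < i)%N -> (1 < j)%N ->
  tangent_move i j Y v i j =
  v i j + (Y i.-1 j * v i.-1 j + Y i j.-1 * v i j.-1) / (Y i.-1 j + Y i j.-1).
Proof. by move=> hi hj; rewrite /tangent_move /snd_grid local_move_lr. Qed.

Lemma tangent_move_row1 j Y v : (1 < j)%N ->
  tangent_move 1 j Y v 1 j = v 1%N j.-1 + v 1%N j.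
Proof. by move=> hj; rewrite /tangent_move /snd_grid local_move_row1. Qed.

(* For [r <= c] the transposed move of the block only writes below the
   diagonal. *)
Lemma block_jacobian_entry n r c m Y x y : block_in n (r, c, m) ->
  block_jacobian n (r, c, m) Y x y =
  tangent_move r c Y (sym_unit R (ut_at y)) (ut_row (ut_at x)) (ut_col (ut_at x)).
Proof.
rewrite /block_in /= => hd; rewrite mxE /tangent_run /sym_block.
case: ifP => [/eqP <-|hne] //; rewrite /run_moves /= /snd_grid local_move_frame //; try lia.
by have [? ? ?] := ut_bounds (ut_at x); rewrite /writes; repeat (case: ifP => //= ?); lia.
Qed.

Lemma block_jacobian_diag n r c m Y x : block_in n (r, c, m) ->
  block_jacobian n (r, c, m) Y x x = 1 \/ block_jacobian n (r, c, m) Y x x = -1.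
Proof.
move=> hd; rewrite block_jacobian_entry //; move: hd; rewrite /block_in /= => hd.
have [? ? ?] := ut_bounds (ut_at x).
case hw: (writes r c (ut_row (ut_at x)) (ut_col (ut_at x))); last first.
  by left; rewrite tangent_move_frame ?hw ?sym_unit_diag ?eqxx //; lia.
have [er|nr] := eqVneq r 1%N; last first.
  move: hw; rewrite writes_inner; try lia.
  case/orP => /andP[/eqP ex1 /eqP ex2]; rewrite ex1 ex2.
    rewrite tangent_move_ul /sym_unit; try lia.
    by right; repeat (case: ifP => ?; try lia); ring.
  rewrite tangent_move_lr /sym_unit; try lia.
  by left; repeat (case: ifP => ?; try lia); ring.
have [ec|nc] := eqVneq c 1%N; first by move: hw; rewrite er ec.
move: hw; rewrite er writes_row1; last by lia.
case/andP => /eqP ex1 /eqP ex2; rewrite ex1 ex2 tangent_move_row1 /sym_unit; last by lia.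
by left; repeat (case: ifP => ?; try lia); ring.
Qed.

Lemma block_jacobian_support n r c m Y x y : block_in n (r, c, m) -> x != y ->
  block_jacobian n (r, c, m) Y x y != 0 ->
  writes r c (ut_row (ut_at x)) (ut_col (ut_at x))
  && ~~ writes r c (ut_row (ut_at y)) (ut_col (ut_at y)).
Proof.
move=> hd hxy; rewrite block_jacobian_entry //; move: hd; rewrite /block_in /= => hd.
have [? ? ?] := ut_bounds (ut_at x); have [? ? ?] := ut_bounds (ut_at y).
case hwx: (writes r c (ut_row (ut_at x)) (ut_col (ut_at x))); last first.
  by rewrite tangent_move_frame ?hwx ?sym_unit_diag ?(negbTE hxy) ?eqxx //; lia.
case hwy: (writes r c (ut_row (ut_at y)) (ut_col (ut_at y))) => //=.
have hxy_at : ut_row (ut_at x) != ut_row (ut_at y) \/ ut_col (ut_at x) != ut_col (ut_at y).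
  by apply/orP; rewrite -negb_and; apply: contra hxy => /andP[/eqP ? /eqP ?];
     apply/eqP/ut_at_inj/ut_eq.
have [er|nr] := eqVneq r 1%N.
  have [ec|nc] := eqVneq c 1%N; first by move: hwx; rewrite er ec.
  by move: hwx hwy; rewrite er !writes_row1; lia.
move: hwx hwy; rewrite !writes_inner; try lia.
case/orP => /andP[/eqP ex1 /eqP ex2] hwy; rewrite ex1 ex2.
  rewrite tangent_move_ul /sym_unit; try lia.
  by repeat (case: ifP => ?; try lia); move=> /eqP h; exfalso; apply: h; ring.
rewrite tangent_move_lr /sym_unit; try lia.
by repeat (case: ifP => ?; try lia); move=> /eqP h; exfalso; apply: h; ring.
Qed.

Lemma mulr_pm1 (a b : R) : (a = 1 \/ a = -1) -> (b = 1 \/ b = -1) -> a * b = 1 \/ a * b = -1.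
Proof. by move=> [->|->] [->|->]; rewrite ?mul1r ?mulr1 ?mulrNN ?mulr1; auto. Qed.

Lemma det_block_jacobian n d Y : block_in n d ->
  \det (block_jacobian n d Y) = 1 \/ \det (block_jacobian n d Y) = -1.
Proof.
case: d => [[r c] m] hd.
rewrite (det_diag_of_support (A := fun x => writes r c (ut_row (ut_at x)) (ut_col (ut_at x)))).
  by apply: (big_ind (fun z => z = 1 \/ z = -1)); [left | exact: mulr_pm1 |
             move=> x _; exact: block_jacobian_diag].
by move=> x y; apply: block_jacobian_support.
Qed.

Lemma det_jacobian_prod n ds Y : all (block_in n) ds ->
  \det (jacobian_prod n ds Y) = 1 \/ \det (jacobian_prod n ds Y) = -1.
Proof.
elim: ds Y => [|d ds IH] Y /=; first by rewrite det1; left.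
move=> /andP[hd hds]; rewrite det_mulmx.
by apply: mulr_pm1; [exact: IH | exact: det_block_jacobian].
Qed.

End BlockDeterminant.

Section LogJacobian.

Variables (R : realType) (n : nat) (W : nat -> nat -> R).
Hypothesis Wpos : forall i j, (1 <= i <= n)%N -> (1 <= j <= n)%N -> 0 < W i j.
Hypothesis Wsym : forall i j, (1 <= i <= n)%N -> (1 <= j <= n)%N -> W i j = W j i.

Lemma tangent_on_pert (b : UT n) :
  tangent_on n (pert (sym_ext W) b) (zip_grid (sym_ext W) (sym_unit R b)).
Proof.
move=> p q hp hq; rewrite /pert /zip_grid /sym_unit /ut_row /ut_col /=.
have hW : 0 < sym_ext W p q by rewrite -(sym_ext_agree Wsym) //; apply: Wpos.
case: ifP => _; split; rewrite ?expR0 ?mulr1 //; last by rewrite mulr0; exact: is_derive_cst.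
move: (is_deriveM (is_derive_cst (sym_ext W p q) (0 : R) (1 : R)) (is_derive_expR 0)).
by move=> /is_derive_eq; apply; rewrite expR0 /GRing.scale /=; ring.
Qed.

Lemma is_derive_logT (a b : UT n) :
  is_derive (0 : R) (1 : R) (logT W b a)
    (snd_grid (run_blocks dual_ul dual_lr dual_edge (sym_blocks n)
                 (zip_grid (sym_ext W) (sym_unit R b))) (ut_row a) (ut_col a)).
Proof.
have [? ? ?] := ut_bounds a.
have -> : logT W b a =
    fun t => ln (rsk_run (rsk_word n) (pert (sym_ext W) b t) (ut_row a) (ut_col a)).
  apply/funext => t; rewrite /logT -/(ut_row a) -/(ut_col a) -gRSK_rsk_word.
  congr ln; apply: gRSK_agree; try lia.
  by move=> p q hp hq; rewrite /pert (sym_ext_agree Wsym) //; case: ifP.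
rewrite /snd_grid -run_moves_rsk_word; apply: tangent_ln.
by apply: (tangent_on_run (rsk_word_in_square n) (tangent_on_pert b)); lia.
Qed.

Lemma logjac_jacobian_prod : logjac n W = jacobian_prod n (sym_blocks n) (sym_ext W).
Proof.
apply/matrixP => x y; rewrite mxE derive1E.
have [_ ->] := is_derive_logT (ut_at x) (ut_at y).
have := ut_vec_tangent_blocks (all_block_in n) (transp_sym_ext W)
                              (transp_sym_unit R (ut_at y)).
rewrite ut_vec_sym_unit -colE.
by move=> /(congr1 (fun M : 'cV[R]_#|{: UT n}| => M x 0)); rewrite !mxE.
Qed.

End LogJacobian.

Theorem theorem5p2 (R : realType) (n : nat) (W : nat -> nat -> R)
  (Wpos : forall i j, (1 <= i <= n)%N -> (1 <= j <= n)%N -> 0 < W i j)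
  (Wsym : forall i j, (1 <= i <= n)%N -> (1 <= j <= n)%N -> W i j = W j i) :
  (forall i j, (1 <= i <= n)%N -> (1 <= j <= n)%N ->
     gRSK n n W i j = gRSK n n W j i) /\
  (forall a b : UT n, derivable (logT W b a) 0 1) /\
  (\det (logjac n W) = 1 \/ \det (logjac n W) = -1).
Proof.
split; first exact: gRSK_sym.
split; first by move=> a b; case: (is_derive_logT Wpos Wsym a b).
by rewrite (logjac_jacobian_prod Wpos Wsym); exact: det_jacobian_prod (all_block_in n).
Qed.
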